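(* Let $G=\langle\Sigma_\tau,Q,\rightarrow,Q^0\rangle$ be a nondeterministic automaton with secret states $Q^S\subseteq Q$, and assume $UR(Q^0)\not\subseteq Q^S$. Let $\sim_o$ be an opaque observation equivalence on $G$ and $\tilde G$ the quotient of $G$ modulo $\sim_o$ (with secret states $\{[x]\mid x\in Q^S\}$). Let $H_{ob}$ be the quotient of $det(\tilde G)$ modulo some opaque bisimulation $\approx_o$, and $H_b$ the quotient of $det(\tilde G)$ modulo some bisimulation equivalence $\approx$. Let $H_{obd}$ be the desired observer of $H_{ob}$, i.e., $H_{ob}$ with every class $[X]$ satisfying $X\subseteq\tilde Q^S$ deleted and only the reachable part kept. Let $T=TPO(det_d(G),det(G))$ and $T'=TPO(H_{obd},H_b)$ be the corresponding largest three-player observers. Then for every finite sequence $\omega$ of labels, $\omega$ labels a path starting at the initial state of $T$ if and only if $\omega$ labels a path starting at the initial state of $T'$.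
   Context: Automata: a (nondeterministic) automaton $G=\langle \Sigma_\tau,Q,\rightarrow,Q^0\rangle$ has finite observable alphabet $\Sigma$, special unobservable symbol $\tau\notin\Sigma$, $\Sigma_\tau=\Sigma\cup\{\tau\}$, transition relation $\rightarrow\subseteq Q\times\Sigma_\tau\times Q$ and initial states $Q^0$. Deterministic: one initial state, no $\tau$-transitions, functional transitions. $p\overset{s}{\Rightarrow}q$ ($s\in\Sigma^*$) means a path from $p$ to $q$ whose labels, with $\tau$'s deleted, spell $s$. $UR(B)=\{q\mid b\overset{\varepsilon}{\Rightarrow}q,\ b\in B\}$. The observer $det(G)$ is the deterministic automaton over $\Sigma$ with initial state $UR(Q^0)$ and $X\xrightarrow{\sigma}Y$ iff $Y=UR(\{y\mid x\xrightarrow{\sigma}y,\ x\in X\})\neq\emptyset$, restricted to reachable states. Given secret states $Q^S$, the desired observer $det_d(G)$ is $det(G)$ with all states $X\subseteq Q^S$ deleted and only the part reachable from the initial state kept. Quotient modulo an equivalence $\sim$: states are classes $[x]$, $[x]\xrightarrow{\sigma}[y]$ iff $x'\xrightarrow{\sigma}y'$ for some $x'\in[x],y'\in[y]$, initial states are classes of initial states. A bisimulation on an automaton is an equivalence $\approx$ such that $x_1\approx x_2$ and $x_1\xrightarrow{\sigma}y_1$ imply $x_2\xrightarrow{\sigma}y_2$ for some $y_2\approx y_1$. An opaque observation equivalence on $G$ is an equivalence $\sim_o$ on $Q$ such that $x_1\sim_o x_2$ implies (i) whenever $x_1\overset{s}{\Rightarrow}y_1$ ($s\in\Sigma^*$)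 there is $y_2\sim_o y_1$ with $x_2\overset{s}{\Rightarrow}y_2$, and (ii) $x_1\in Q^S\iff x_2\in Q^S$. An opaque bisimulation on $det(G)$ is an equivalence $\approx_o$ on its states such that $X_1\approx_o X_2$ implies (i) whenever $X_1\xrightarrow{s}Y_1$ there is $Y_2\approx_o Y_1$ with $X_2\xrightarrow{s}Y_2$, and (ii) $X_1\subseteq Q^S\iff X_2\subseteq Q^S$. Largest three-player observer: let $D=\langle\Sigma,X_D,\rightarrow_D,d_0\rangle$ and $F=\langle\Sigma,X_F,\rightarrow_F,f_0\rangle$ be deterministic automata. Let $\epsilon$ be a fresh symbol and $\Sigma^r=\{\sigma\to\epsilon\mid\sigma\in\Sigma\}$ a set of fresh ''erasure'' symbols. $TPO(D,F)$ is the labeled transition system whose states are of three types: $Y$-states $(d,f)\in X_D\times X_F$; $Z$-states $Z((d,f),e)$ with $e\in\Sigma$; $W$-states $W((d,f),a)$ with $a\in\Sigma\cup\Sigma^r$. Its initial state is the $Y$-state $(d_0,f_0)$, its states are those reachable from it, and its transitions are exactly: (1) $(d,f)\xrightarrow{e}Z((d,f),e)$ whenever $e$ is defined at $f$ in $F$; (2) $Z((d,f),e)\xrightarrow{\theta}Z((d',f),e)$ for $\theta\in\Sigma$ whenever $d\xrightarrow{\theta}_D d'$; (3) $Z((d,f),e)\xrightarrow{\epsilon}W((d,f),e)$ whenever $e$ is defined at $d$ in $D$ and at $f$ in $F$; (4) $Z((d,f),e)\xrightarrow{e\to\epsilon}W((d,f),e\to\epsilon)$ whenever $e$ is defined at $f$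 in $F$; (5) $W((d,f),e)\xrightarrow{e}(d',f')$ where $d\xrightarrow{e}_Dd'$ and $f\xrightarrow{e}_Ff'$; (6) $W((d,f),e\to\epsilon)\xrightarrow{e}(d,f')$ where $f\xrightarrow{e}_Ff'$. (The initial states of $D$ must exist, i.e., $D$ is nonempty.) *)

From mathcomp Require Import all_boot.
Set Implicit Arguments.
Unset Strict Implicit.
Unset Printing Implicit Defensive.

(* Only transitions between states of [states] are meaningful (see [edge]). *)
Record aut (L : Type) (S : finType) := Aut {
  states : {set S};
  trans  : S -> L -> S -> bool;
  init   : {set S} }.

Definition edge L S (A : aut L S) (x : S) (a : L) (y : S) : bool :=
  [&& x \in states A, y \in states A & trans A x a y].

Definition init' L S (A : aut L S) : {set S} := init A :&: states A.

Inductive lpath (X L : Type) (st : X -> L -> X -> Prop) : X -> seq L -> X -> Prop :=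
| lp_nil x : lpath st x [::] x
| lp_cons x a y w z : st x a y -> lpath st y w z -> lpath st x (a :: w) z.

Definition reachable (L : finType) S (A : aut L S) : {set S} :=
  [set y | [exists x in init' A, connect (fun u v => [exists a : L, edge A u a v]) x y]].

Definition trim (L : finType) S (A : aut L S) : aut L S :=
  Aut (reachable A) (trans A) (init A).

Definition delete L S (A : aut L S) (P : {set S}) : aut L S :=
  Aut (states A :\: P) (trans A) (init A).

Section NFA.
Variables (Sig : finType) (Q : finType).
Implicit Types (G : aut (option Sig) Q).

Inductive wtr G : Q -> seq Sig -> Q -> Prop :=
| wt_nil x : x \in states G -> wtr G x [::] x
| wt_tau x y s z : edge G x None y -> wtr G y s z -> wtr G x s z
| wt_sym x y a s z : edge G x (Some a) y -> wtr G y s z -> wtr G x (a :: s) z.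

Definition UR G (B : {set Q}) : {set Q} :=
  [set q | [exists b in B, connect (fun x y => edge G x None y) b q]].

Definition post G (X : {set Q}) (s : Sig) : {set Q} :=
  [set y | [exists x in X, edge G x (Some s) y]].

Definition det G : aut Sig {set Q} :=
  trim (Aut [set: {set Q}]
            (fun X s Y => (Y == UR G (post G X s)) && (Y != set0))
            [set UR G (init' G)]).

Definition det_d G (Qs : {set Q}) : aut Sig {set Q} :=
  trim (delete (det G) [set X : {set Q} | X \subset Qs]).
End NFA.

Definition equiv_on S (P : {set S}) (R : rel S) : Prop :=
  [/\ forall x, x \in P -> R x x,
      forall x y, x \in P -> y \in P -> R x y -> R y x &
      forall x y z, x \in P -> y \in P -> z \in P -> R x y -> R y z -> R x z].

Definition qcls L S (A : aut L S) (R : rel S) (x : S) : {set S} :=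
  [set y in states A | R x y].

Definition quot L S (A : aut L S) (R : rel S) : aut L {set S} :=
  Aut [set qcls A R x | x in states A]
      (fun C a D => [exists x in C, exists y in D, edge A x a y])
      [set qcls A R x | x in init' A].

Definition qsecret L S (A : aut L S) (R : rel S) (Qs : {set S}) : {set {set S}} :=
  [set qcls A R x | x in Qs].

Definition opaque_obs_eq (Sig Q : finType) (G : aut (option Sig) Q)
    (Qs : {set Q}) (R : rel Q) : Prop :=
  equiv_on (states G) R /\
  forall x1 x2, x1 \in states G -> x2 \in states G -> R x1 x2 ->
    (forall s y1, wtr G x1 s y1 -> exists y2, R y2 y1 /\ wtr G x2 s y2) /\
    (x1 \in Qs <-> x2 \in Qs).

Definition bisim (Sig S : finType) (A : aut Sig S) (R : rel S) : Prop :=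
  equiv_on (states A) R /\
  forall x1 x2, x1 \in states A -> x2 \in states A -> R x1 x2 ->
    forall a y1, edge A x1 a y1 -> exists y2, R y2 y1 /\ edge A x2 a y2.

Definition opaque_bisim (Sig T : finType) (A : aut Sig {set T})
    (Qs : {set T}) (R : rel {set T}) : Prop :=
  equiv_on (states A) R /\
  forall X1 X2, X1 \in states A -> X2 \in states A -> R X1 X2 ->
    (forall s Y1, lpath (fun x a y => edge A x a y) X1 s Y1 ->
        exists Y2, R Y2 Y1 /\ lpath (fun x a y => edge A x a y) X2 s Y2) /\
    (X1 \subset Qs <-> X2 \subset Qs).

(* labels: symbols of Sig, the fresh symbol epsilon, erasures (s -> epsilon) *)
Inductive tlabel (Sig : Type) := TSym of Sig | TEps | TErase of Sig.
Arguments TEps {Sig}.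

(* Y-states (d,f); Z-states Z((d,f),e); W-states W((d,f),a) with a in
   Sig + Sig^r, encoded as inl e (= e) or inr e (= e -> epsilon) *)
Inductive tstate (Sig SD SF : Type) :=
| TY of SD & SF
| TZ of SD & SF & Sig
| TW of SD & SF & (Sig + Sig).
Arguments TY {Sig SD SF}.
Arguments TZ {Sig SD SF}.
Arguments TW {Sig SD SF}.
Arguments TSym {Sig}.
Arguments TErase {Sig}.

Section TPO.
Variables (Sig : finType) (SD SF : finType) (D : aut Sig SD) (F : aut Sig SF).

Definition defD (d : SD) (e : Sig) := exists d', edge D d e d'.
Definition defF (f : SF) (e : Sig) := exists f', edge F f e f'.

Inductive tpo_step : tstate Sig SD SF -> tlabel Sig -> tstate Sig SD SF -> Prop :=
| tpo1 (d : SD) (f : SF) (e : Sig) : defF f e -> tpo_step (TY d f) (TSym e) (TZ d f e)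
| tpo2 d d' f e th : edge D d th d' -> tpo_step (TZ d f e) (TSym th) (TZ d' f e)
| tpo3 d f e : defD d e -> defF f e -> tpo_step (TZ d f e) TEps (TW d f (inl e))
| tpo4 d f e : defF f e -> tpo_step (TZ d f e) (TErase e) (TW d f (inr e))
| tpo5 d d' f f' e : edge D d e d' -> edge F f e f' ->
    tpo_step (TW d f (inl e)) (TSym e) (TY d' f')
| tpo6 d f f' e : edge F f e f' -> tpo_step (TW d f (inr e)) (TSym e) (TY d f').

Definition tpo_trace (w : seq (tlabel Sig)) : Prop :=
  exists d0 f0, d0 \in init' D /\ f0 \in init' F /\
    exists t, lpath tpo_step (TY d0 f0) w t.
End TPO.

From mathcomp Require Import all_boot.

Set Implicit Arguments.
Unset Strict Implicit.
Unset Printing Implicit Defensive.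

(* For deterministic D and F, the traces of TPO(D,F) depend only on the
   languages of D and F: if D', F' are deterministic with the same languages,
   a run of TPO(D,F) is matched step by step in TPO(D',F') by pairing the
   states reached by the same word.  It therefore suffices to relate each
   pair of observers by a bisimulation.  The quotient of G by an opaque observation equivalence has an observer
   bisimilar to det(G) through X |-> {[x] | x in X}, which also preserves
   "X is secret"; quotienting by a bisimulation preserves bisimilarity, and
   an opaque bisimulation also preserves secrecy, so deleting the secret
   states on both sides keeps the two desired observers bisimilar. *)

Notation epath A := (lpath (fun x a y => edge A x a y)).
Notation tau_step G := (fun x y => edge G x None y).

Lemma lpath_nilE (X L : Type) (st : X -> L -> X -> Prop) x z :
  lpath st x [::] z -> x = z.
Proof. by move=> h; inversion h. Qed.

Lemma lpath_consE (X L : Type) (st : X -> L -> X -> Prop) x a w z :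
  lpath st x (a :: w) z -> exists y, st x a y /\ lpath st y w z.
Proof. by move=> h; inversion h; subst; eauto. Qed.

Lemma edge_states L S (A : aut L S) x a y :
  edge A x a y -> x \in states A /\ y \in states A.
Proof. by case/and3P. Qed.

Section Bisimilarity.
Variable L : Type.

Definition lang S (A : aut L S) (s : seq L) : Prop :=
  exists x0, x0 \in init' A /\ exists y, epath A x0 s y.

Definition rel_bisim S1 S2 (A : aut L S1) (B : aut L S2) (R : S1 -> S2 -> Prop) :=
  [/\ forall x, x \in init' A -> exists y, y \in init' B /\ R x y,
      forall y, y \in init' B -> exists x, x \in init' A /\ R x y,
      forall x y a x', R x y -> edge A x a x' -> exists y', edge B y a y' /\ R x' y' &
      forall x y a y', R x y -> edge B y a y' -> exists x', edge A x a x' /\ R x' y'].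

Definition bisimilar S1 S2 (A : aut L S1) (B : aut L S2)
    (P1 : pred S1) (P2 : pred S2) :=
  exists2 R, rel_bisim A B R & forall x y, R x y -> P1 x = P2 y.

Variables (S1 S2 S3 : finType) (A : aut L S1) (B : aut L S2) (C : aut L S3).
Variables (P1 : pred S1) (P2 : pred S2) (P3 : pred S3).

Lemma bisimilar_lang s : bisimilar A B P1 P2 -> lang A s -> lang B s.
Proof.
case=> R [hinit _ hforth _] _ [x0 [hx0 [y hp]]].
have [y0 [hy0 hr]] := hinit _ hx0.
exists y0; split=> //; elim: hp y0 hr {hx0 hy0} => [x|x a x' w z he hp IH] y0 hr.
  by exists y0; constructor.
have [y' [he' hr']] := hforth _ _ _ _ hr he.
have [z' hz'] := IH _ hr'.
by exists z'; apply: lp_cons he' hz'.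
Qed.

Lemma bisimilar_sym : bisimilar A B P1 P2 -> bisimilar B A P2 P1.
Proof.
case=> R [h1 h2 h3 h4] hP; exists (fun y x => R x y); last by move=> y x /hP.
split=> [y /h2 | x /h1 | y x a y' hr /(h4 _ _ _ _ hr) | y x a x' hr /(h3 _ _ _ _ hr)] //.
Qed.

Lemma bisimilar_trans :
  bisimilar A B P1 P2 -> bisimilar B C P2 P3 -> bisimilar A C P1 P3.
Proof.
case=> R1 [a1 a2 a3 a4] hP1 [R2 [b1 b2 b3 b4] hP2].
exists (fun x z => exists y, R1 x y /\ R2 y z); last first.
  by move=> x z [y [/hP1 -> /hP2]].
split.
- move=> x /a1 [y [/b1 [z [hz h2]] h1]]; exists z; split=> //; by exists y.
- move=> z /b2 [y [/a2 [x [hx h1]] h2]]; exists x; split=> //; by exists y.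
- move=> x z a x' [y [h1 h2]] he.
  have [y' [he' h1']] := a3 _ _ _ _ h1 he.
  have [z' [he'' h2']] := b3 _ _ _ _ h2 he'.
  exists z'; split=> //; by exists y'.
- move=> x z a z' [y [h1 h2]] he.
  have [y' [he' h2']] := b4 _ _ _ _ h2 he.
  have [x' [he'' h1']] := a4 _ _ _ _ h1 he'.
  exists x'; split=> //; by exists y'.
Qed.

Lemma bisimilar_predT : bisimilar A B P1 P2 -> bisimilar A B predT predT.
Proof. by case=> R hR _; exists R. Qed.
End Bisimilarity.

Section Delete.
Variables (L : Type) (S1 S2 : finType) (A : aut L S1) (B : aut L S2).
Variables (P1 : pred S1) (P2 : pred S2).

Lemma bisimilar_delete : bisimilar A B P1 P2 ->
  bisimilar (delete A [set x | P1 x]) (delete B [set y | P2 y]) P1 P2.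
Proof.
case=> R [a1 a2 a3 a4] hP; exists R => //.
have edge_del U (D : aut L U) (P : pred U) x a y :
    edge (delete D [set x | P x]) x a y = [&& edge D x a y, ~~ P x & ~~ P y].
  rewrite /edge /= !inE.
  by case: (P x); case: (P y); case: (x \in _); case: (y \in _); case: (trans D x a y).
have init_del U (D : aut L U) (P : pred U) x :
    (x \in init' (delete D [set x | P x])) = (x \in init' D) && ~~ P x.
  rewrite /init' /= !inE.
  by case: (P x); rewrite ?andbF ?andbT.
split.
- move=> x; rewrite init_del => /andP [/a1 [y [hy hr]] hx].
  by exists y; rewrite init_del hy -(hP _ _ hr).
- move=> y; rewrite init_del => /andP [/a2 [x [hx hr]] hy].
  by exists x; rewrite init_del hx (hP _ _ hr).
- move=> x y a x' hr; rewrite edge_del => /and3P [/(a3 _ _ _ _ hr) [y' [he hr']] hx hx'].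
  by exists y'; rewrite edge_del he -(hP _ _ hr) -(hP _ _ hr') hx hx'.
- move=> x y a y' hr; rewrite edge_del => /and3P [/(a4 _ _ _ _ hr) [x' [he hr']] hy hy'].
  by exists x'; rewrite edge_del he (hP _ _ hr) (hP _ _ hr') hy hy'.
Qed.
End Delete.

Section Deterministic.
Variables (L : Type) (S : finType).

Definition deterministic (A : aut L S) :=
  (forall x y, x \in init' A -> y \in init' A -> x = y) /\
  (forall x a y z, edge A x a y -> edge A x a z -> y = z).

Lemma deterministic_sub (A B : aut L S) :
  states B \subset states A -> trans B = trans A -> init B = init A ->
  deterministic A -> deterministic B.
Proof.
move=> hs ht hi [d1 d2].
have hE x a y : edge B x a y -> edge A x a y.
  by rewrite /edge ht => /and3P [hx hy ->]; rewrite !(subsetP hs).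
have hI x : x \in init' B -> x \in init' A.
  by rewrite /init' hi !inE => /andP [-> /(subsetP hs) ->].
split; first by move=> x y /hI hx /hI hy; apply: d1.
by move=> x a y z /hE h1 /hE h2; apply: d2 h1 h2.
Qed.

Lemma deterministic_delete (A : aut L S) P : deterministic A -> deterministic (delete A P).
Proof. by apply: deterministic_sub => //=; exact: subsetDl. Qed.
End Deterministic.

Section Trim.
Variables (L S : finType) (A : aut L S).

Lemma reachable_sub : reachable A \subset states A.
Proof.
apply/subsetP => y; rewrite inE => /exists_inP [x hx /connectP [p hp ->]].
move: hx; rewrite inE => /andP [_]; elim: p x hp => [|z p IH] x //=.
by case/andP=> /existsP [a /and3P [_ hz _]] hp _; exact: IH hp hz.
Qed.

Lemma reachable_edge x a y : x \in reachable A -> edge A x a y -> y \in reachable A.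
Proof.
rewrite !inE => /exists_inP [x0 h0 hc] he; apply/exists_inP; exists x0 => //.
by apply: connect_trans hc (connect1 _); apply/existsP; exists a.
Qed.

Lemma init_reachable x : x \in init' A -> x \in reachable A.
Proof. by move=> hx; rewrite inE; apply/exists_inP; exists x => //; exact: connect0. Qed.

Lemma bisimilar_trim (P : pred S) : bisimilar (trim A) A P P.
Proof.
exists (fun x y => x = y /\ x \in reachable A); last by move=> x y [->].
split.
- move=> x; rewrite /init' /= in_setI => /andP [hi hr]; exists x; split=> //.
  by rewrite in_setI hi (subsetP reachable_sub _ hr).
- move=> y hy; exists y; split; last by split=> //; exact: init_reachable.
  by move: (hy); rewrite /init' /= !in_setI => /andP [-> _] /=; exact: init_reachable.
- move=> x y a x' [<- hr]; rewrite /edge /= => /and3P [_ h2 h3].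
  by exists x'; split=> //; rewrite /edge h3 !(subsetP reachable_sub).
- move=> x y a y' [<- hr] he; exists y'; split; last by split=> //; apply: reachable_edge he.
  by move: (he); rewrite /edge /= => /and3P [_ _ ->]; rewrite hr (reachable_edge hr he).
Qed.

Lemma deterministic_trim : deterministic A -> deterministic (trim A).
Proof. by apply: deterministic_sub => //=; exact: reachable_sub. Qed.
End Trim.

Section Classes.
Variables (L : Type) (S : finType) (A : aut L S) (R : rel S).
Hypothesis HR : equiv_on (states A) R.

Lemma qcls_eq x y : x \in states A -> y \in states A -> R x y -> qcls A R x = qcls A R y.
Proof.
case: HR => _ Rsym Rtrans hx hy hr; apply/setP => z; rewrite !inE.
case hz: (z \in states A) => //=; apply/idP/idP.
  exact: Rtrans (Rsym _ _ hx hy hr).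
exact: Rtrans hr.
Qed.

Lemma qcls_eq_rel x y : y \in states A -> qcls A R x = qcls A R y -> R x y.
Proof.
case: HR => Rrefl _ _ hy e.
have : y \in qcls A R y by rewrite inE hy Rrefl.
by rewrite -e inE => /andP [].
Qed.

Lemma qcls_mem x y : x \in states A -> y \in qcls A R x -> qcls A R y = qcls A R x.
Proof.
move=> hx; rewrite inE => /andP [hy r].
by apply/esym/qcls_eq.
Qed.
End Classes.

Section Quotient.
Variables (L S : finType) (A : aut L S) (R : rel S).
Hypothesis HR : bisim A R.

Lemma quot_stateP C : C \in states (quot A R) -> exists2 x, x \in states A & C = qcls A R x.
Proof. by move/imsetP. Qed.

Lemma bisimilar_quot (P : pred S) :
  {in states A &, forall x y, R x y -> P x = P y} ->
  bisimilar A (quot A R) P (fun C => [exists x in C, P x]).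
Proof.
case: HR => [[Rrefl Rsym _] Rforth] hP.
have qcls_self x : x \in states A -> x \in qcls A R x by move=> hx; rewrite inE hx Rrefl.
have qcls_state x : x \in states A -> qcls A R x \in states (quot A R).
  by move=> hx; apply: imset_f.
exists (fun x C => x \in states A /\ C = qcls A R x); last first.
  move=> x _ [hx ->]; apply/idP/exists_inP => [hPx | [y]]; first by exists x; rewrite ?qcls_self.
  by rewrite inE => /andP [hy /(hP _ _ hx hy) ->].
split.
- move=> x hx; move: (hx); rewrite inE => /andP [hi hs].
  by exists (qcls A R x); rewrite inE qcls_state // andbT; split=> //; apply: imset_f.
- move=> C; rewrite inE => /andP [/imsetP [x hx ->] _]; exists x; split=> //.
  by move: hx; rewrite inE => /andP [].
- move=> x C a x' [hx ->] he; have [_ hx'] := edge_states he.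
  exists (qcls A R x'); split=> //; rewrite /edge /= !qcls_state //=.
  apply/exists_inP; exists x; rewrite ?qcls_self //.
  by apply/exists_inP; exists x'; rewrite ?qcls_self.
- move=> x C a C' [hx ->] /and3P [_ /quot_stateP [z hz ->]].
  case/exists_inP=> x1; rewrite inE => /andP [hx1 r1] /exists_inP [y1 hy1 he].
  have [y2 [ry hy2]] := Rforth x1 x hx1 hx (Rsym _ _ hx hx1 r1) a y1 he.
  have [[_ sy1] [_ sy2]] := (edge_states he, edge_states hy2).
  exists y2; split=> //; split=> //.
  by rewrite -(qcls_mem HR.1 hz hy1); apply: (qcls_eq HR.1) => //; apply: Rsym.
Qed.

Lemma deterministic_quot : deterministic A -> deterministic (quot A R).
Proof.
case: HR => [Requiv Rforth] [d1 d2]; split.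
- move=> C1 C2; rewrite !inE => /andP [/imsetP [x1 h1 ->] _] /andP [/imsetP [x2 h2 ->] _].
  by rewrite (d1 _ _ h1 h2).
- move=> C a C1 C2 /and3P [/quot_stateP [z hz ->] /quot_stateP [z1 hz1 ->]].
  case/exists_inP=> x1 hx1 /exists_inP [y1 hy1 he1].
  case/and3P=> _ /quot_stateP [z2 hz2 ->] /exists_inP [x2 hx2 /exists_inP [y2 hy2 he2]].
  rewrite -(qcls_mem Requiv hz1 hy1) -(qcls_mem Requiv hz2 hy2).
  have [[sx1 sy1] [sx2 sy2]] := (edge_states he1, edge_states he2).
  have r12 : R x1 x2.
    by apply: (qcls_eq_rel Requiv) => //; rewrite (qcls_mem Requiv hz hx1) (qcls_mem Requiv hz hx2).
  have [y [ry hy]] := Rforth x1 x2 sx1 sx2 r12 a y1 he1.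
  rewrite (d2 _ _ _ _ hy he2) in ry.
  by rewrite (qcls_eq Requiv sy2 sy1 ry).
Qed.
End Quotient.

Lemma opaque_bisim_bisim (Sig T : finType) (A : aut Sig {set T}) Qs R :
  opaque_bisim A Qs R -> bisim A R.
Proof.
case=> he h; split=> // x1 x2 h1 h2 r a y1 e1.
have [Y2 [rY hp]] := (h x1 x2 h1 h2 r).1 [:: a] y1 (lp_cons e1 (lp_nil _ _)).
have [y [e hnil]] := lpath_consE hp.
by exists Y2; split; rewrite // -(lpath_nilE hnil).
Qed.

Lemma opaque_bisim_secret (Sig T : finType) (A : aut Sig {set T}) Qs R :
  opaque_bisim A Qs R -> {in states A &, forall X Y, R X Y -> (X \subset Qs) = (Y \subset Qs)}.
Proof. by case=> _ h X Y hX hY /(h X Y hX hY) [_ hs]; apply/idP/idP => /hs. Qed.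

Section Words.
Variables (L : Type) (S : finType) (A : aut L S).

Definition reached (u : seq L) (x : S) := exists x0, x0 \in init' A /\ epath A x0 u x.

Lemma epath_det : deterministic A -> forall x u y z, epath A x u y -> epath A x u z -> y = z.
Proof.
move=> [_ hd] x u y z hp; elim: hp z => [x0|x0 a y0 w z0 he hp IH] z' hq.
  exact: lpath_nilE hq.
have [y1 [he1 hp1]] := lpath_consE hq.
by rewrite -(hd _ _ _ _ he he1) in hp1; apply: IH.
Qed.

Lemma epath_rcons x u y a z : epath A x u y -> edge A y a z -> epath A x (rcons u a) z.
Proof.
elim=> [x0|x0 b y0 w z0 he hp IH] hz /=; first by apply: lp_cons hz (lp_nil _ _).
exact: lp_cons he (IH hz).
Qed.

Lemma epath_rconsP x u a z :
  epath A x (rcons u a) z -> exists y, epath A x u y /\ edge A y a z.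
Proof.
elim: u x => [|b u IH] x /= hp; have [y1 [he1 hp1]] := lpath_consE hp.
  by exists x; rewrite -(lpath_nilE hp1); split=> //; constructor.
have [m [hm he]] := IH _ hp1.
by exists m; split=> //; apply: lp_cons he1 hm.
Qed.
End Words.

Section SameWord.
Variables (L : Type) (S1 S2 : finType) (A1 : aut L S1) (A2 : aut L S2).
Hypothesis det2 : deterministic A2.
Hypothesis lang12 : forall s, lang A1 s -> lang A2 s.

Definition same_word x1 x2 := exists u, reached A1 u x1 /\ reached A2 u x2.

Lemma same_word_init x1 x2 : x1 \in init' A1 -> x2 \in init' A2 -> same_word x1 x2.
Proof. by move=> h1 h2; exists [::]; split; [exists x1 | exists x2]; split=> //; constructor. Qed.

(* Determinism of A2 forces its run on u a to pass through the state reached by u. *)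
Lemma same_word_step x1 x2 a y1 : same_word x1 x2 -> edge A1 x1 a y1 ->
  exists y2, edge A2 x2 a y2 /\ same_word y1 y2.
Proof.
move=> [u [[x0 [hx0 hp1]] [y0 [hy0 hp2]]]] he.
have hrun := epath_rcons hp1 he.
have [y0' [hy0' [y2 hp2']]] : lang A2 (rcons u a).
  by apply: lang12; exists x0; split=> //; exists y1.
have [m [hm he2]] := epath_rconsP hp2'.
rewrite -(det2.1 _ _ hy0 hy0') in hm hp2'.
rewrite (epath_det det2 hm hp2) in he2.
by exists y2; split=> //; exists (rcons u a); split; [exists x0 | exists y0].
Qed.
End SameWord.

Section ThreePlayerObserver.
Variables (Sig : finType) (SD1 SF1 SD2 SF2 : finType).
Variables (D1 : aut Sig SD1) (F1 : aut Sig SF1) (D2 : aut Sig SD2) (F2 : aut Sig SF2).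
Hypotheses (detD2 : deterministic D2) (detF2 : deterministic F2).
Hypotheses (langD : forall s, lang D1 s -> lang D2 s) (langF : forall s, lang F1 s -> lang F2 s).

Definition tpo_rel (t1 : tstate Sig SD1 SF1) (t2 : tstate Sig SD2 SF2) : Prop :=
  match t1, t2 with
  | TY d1 f1, TY d2 f2 => same_word D1 D2 d1 d2 /\ same_word F1 F2 f1 f2
  | TZ d1 f1 e1, TZ d2 f2 e2 => [/\ same_word D1 D2 d1 d2, same_word F1 F2 f1 f2 & e1 = e2]
  | TW d1 f1 a1, TW d2 f2 a2 => [/\ same_word D1 D2 d1 d2, same_word F1 F2 f1 f2 & a1 = a2]
  | _, _ => False
  end.

Let stepD := same_word_step detD2 langD.
Let stepF := same_word_step detF2 langF.

Lemma tpo_step_sim t1 l t1' t2 : tpo_rel t1 t2 -> tpo_step D1 F1 t1 l t1' ->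
  exists t2', tpo_step D2 F2 t2 l t2' /\ tpo_rel t1' t2'.
Proof.
move=> hr hs; case: hs hr.
- move=> d f e [f' hf]; case: t2 => //= d2 f2 [rd rf].
  have [f2' [he _]] := stepF rf hf.
  by exists (TZ d2 f2 e); split; [apply: tpo1; exists f2' | split].
- move=> d d' f e th he; case: t2 => //= d2 f2 e2 [rd rf <-].
  have [d2' [he' rd']] := stepD rd he.
  by exists (TZ d2' f2 e); split; [apply: tpo2 | split].
- move=> d f e [d' hd'] [f' hf']; case: t2 => //= d2 f2 e2 [rd rf <-].
  have [d2' [he1 _]] := stepD rd hd'.
  have [f2' [he2 _]] := stepF rf hf'.
  by exists (TW d2 f2 (inl e)); split; [apply: tpo3; [exists d2' | exists f2'] | split].
- move=> d f e [f' hf']; case: t2 => //= d2 f2 e2 [rd rf <-].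
  have [f2' [he2 _]] := stepF rf hf'.
  by exists (TW d2 f2 (inr e)); split; [apply: tpo4; exists f2' | split].
- move=> d d' f f' e hd' hf'; case: t2 => //= d2 f2 a2 [rd rf <-].
  have [d2' [he1 rd']] := stepD rd hd'.
  have [f2' [he2 rf']] := stepF rf hf'.
  by exists (TY d2' f2'); split; [apply: tpo5 | split].
- move=> d f f' e hf'; case: t2 => //= d2 f2 a2 [rd rf <-].
  have [f2' [he2 rf']] := stepF rf hf'.
  by exists (TY d2 f2'); split; [apply: tpo6 | split].
Qed.

Lemma tpo_trace_sim w : tpo_trace D1 F1 w -> tpo_trace D2 F2 w.
Proof.
move=> [d0 [f0 [hd0 [hf0 [t hp]]]]].
have [d0' [hd0' _]] : lang D2 [::] by apply: langD; exists d0; split=> //; exists d0; constructor.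
have [f0' [hf0' _]] : lang F2 [::] by apply: langF; exists f0; split=> //; exists f0; constructor.
exists d0', f0'; split=> //; split=> //.
have : tpo_rel (TY d0 f0) (TY d0' f0') by split; apply: same_word_init.
elim: hp (TY d0' f0') => [x|x a y w' z hs hp IH] t2 hr; first by exists t2; constructor.
have [t2' [hs' hr']] := tpo_step_sim hr hs.
have [z' hz'] := IH _ hr'.
by exists z'; apply: lp_cons hs' hz'.
Qed.
End ThreePlayerObserver.

Lemma tpo_trace_bisimilar (Sig SD1 SF1 SD2 SF2 : finType)
    (D1 : aut Sig SD1) (F1 : aut Sig SF1) (D2 : aut Sig SD2) (F2 : aut Sig SF2)
    PD1 PF1 PD2 PF2 w :
  deterministic D1 -> deterministic F1 -> deterministic D2 -> deterministic F2 ->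
  bisimilar D1 D2 PD1 PD2 -> bisimilar F1 F2 PF1 PF2 ->
  tpo_trace D1 F1 w <-> tpo_trace D2 F2 w.
Proof.
move=> dD1 dF1 dD2 dF2 hD hF.
split; apply: tpo_trace_sim => // s; apply: bisimilar_lang.
- exact: hD.
- exact: hF.
- exact: bisimilar_sym hD.
- exact: bisimilar_sym hF.
Qed.

Section Observer.
Variables (Sig T : finType) (H : aut (option Sig) T).

Definition pre_det : aut Sig {set T} :=
  Aut [set: {set T}] (fun X s Y => (Y == UR H (post H X s)) && (Y != set0))
      [set UR H (init' H)].

Lemma edge_pre_det X a Y : edge pre_det X a Y = (Y == UR H (post H X a)) && (Y != set0).
Proof. by rewrite /edge /= !in_setT. Qed.

Lemma deterministic_det : deterministic (det H).
Proof.
apply: deterministic_trim; split.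
  by move=> x y; rewrite !in_setI !in_set1 => /andP [/eqP -> _] /andP [/eqP -> _].
by move=> x a y z; rewrite !edge_pre_det => /andP [/eqP -> _] /andP [/eqP -> _].
Qed.

Definition tau_closed (X : {set T}) :=
  forall x y, x \in X -> connect (tau_step H) x y -> y \in X.

Lemma tau_closed_UR B : tau_closed (UR H B).
Proof.
move=> x y; rewrite !inE => /exists_inP [b hb hc] hc'.
by apply/exists_inP; exists b; last exact: connect_trans hc hc'.
Qed.

Lemma wtr_nil_connect x y : wtr H x [::] y -> connect (tau_step H) x y.
Proof.
move Es : [::] => s hw; elim: hw Es => [x0 _ _|x0 y0 s0 z0 he _ IH /IH|] //.
exact/connect_trans/connect1.
Qed.

Lemma wtr_single x a y : wtr H x [:: a] y ->
  exists m n, [/\ connect (tau_step H) x m, edge H m (Some a) n & connect (tau_step H) n y].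
Proof.
move Es : [:: a] => s hw; elim: hw Es => [//|x0 y0 s0 z0 he _ IH /IH|x0 y0 a0 s0 z0 he hw _ [-> e]].
  by case=> m [n [h1 h2 h3]]; exists m, n; split=> //; apply/connect_trans/h1/connect1.
by exists x0, y0; split=> //; apply: wtr_nil_connect; rewrite e.
Qed.
End Observer.

Section QuotientObserver.
Variables (Sig Q : finType) (G : aut (option Sig) Q) (Qs : {set Q}) (simo : rel Q).
Hypothesis HQ : states G = [set: Q].
Hypothesis Hsimo : opaque_obs_eq G Qs simo.
Local Notation Gq := (quot G simo).
Local Notation qc := (qcls G simo).

Lemma statesG x : x \in states G. Proof. by rewrite HQ inE. Qed.

Lemma simo_refl x : simo x x.
Proof. by case: Hsimo => [[h _ _] _]; apply: h; exact: statesG. Qed.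

Lemma simo_sym x y : simo x y -> simo y x.
Proof. by case: Hsimo => [[_ h _] _]; apply: h; exact: statesG. Qed.

Lemma simo_trans x y z : simo x y -> simo y z -> simo x z.
Proof. by case: Hsimo => [[_ _ h] _]; apply: h; exact: statesG. Qed.

Lemma mem_qc x y : (y \in qc x) = simo x y.
Proof. by rewrite inE statesG. Qed.

Lemma simo_wtr x1 x2 s y1 : simo x1 x2 -> wtr G x1 s y1 ->
  exists y2, simo y2 y1 /\ wtr G x2 s y2.
Proof. by move=> h; apply: (Hsimo.2 x1 x2 (statesG _) (statesG _) h).1. Qed.

Lemma qc_state x : qc x \in states Gq. Proof. exact: imset_f (statesG x). Qed.

Lemma quot_edge x l y : edge G x l y -> edge Gq (qc x) l (qc y).
Proof.
move=> he; rewrite /edge /= !qc_state /=.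
apply/exists_inP; exists x; rewrite ?mem_qc ?simo_refl //.
by apply/exists_inP; exists y; rewrite ?mem_qc ?simo_refl.
Qed.

Lemma quot_connect x y : connect (tau_step G) x y -> connect (tau_step Gq) (qc x) (qc y).
Proof.
case/connectP=> p hp ->; elim: p x hp => [|z p IH] x /=; first by move=> _; exact: connect0.
by case/andP=> he hp; apply: connect_trans _ (IH _ hp); apply: connect1; exact: quot_edge.
Qed.

(* An edge of the quotient leaving [x] is realised by a weak transition from x itself,
   because simo transfers weak transitions. *)
Lemma quot_edge_wtr x l D : edge Gq (qc x) l D ->
  exists y, D = qc y /\ wtr G x (seq_of_opt l) y.
Proof.
case/and3P=> _ /imsetP [z _ ->] /exists_inP [x' hx' /exists_inP [y' hy' he]].
rewrite mem_qc in hx'; rewrite mem_qc in hy'.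
have hw : wtr G x' (seq_of_opt l) y'.
  case: l he => [a|] he; first exact: wt_sym he (wt_nil (statesG _)).
  exact: wt_tau he (wt_nil (statesG _)).
have [y2 [r hw2]] := simo_wtr (simo_sym hx') hw.
exists y2; split=> //; apply: (qcls_eq Hsimo.1); rewrite ?statesG //.
exact: simo_trans hy' (simo_sym r).
Qed.

Lemma quot_connect_lower x D : connect (tau_step Gq) (qc x) D ->
  exists y, D = qc y /\ connect (tau_step G) x y.
Proof.
case/connectP=> p hp ->; elim: p x hp => [|C p IH] x /=.
  by move=> _; exists x; split=> //; exact: connect0.
case/andP=> /quot_edge_wtr [y2 [-> /wtr_nil_connect hc]] /IH [y [-> hc']].
by exists y; split=> //; apply: connect_trans hc hc'.
Qed.

Lemma qc_UR_post X a : tau_closed G X ->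
  qc @: UR G (post G X a) = UR Gq (post Gq (qc @: X) a).
Proof.
move=> hX; apply/setP => D; apply/imsetP/idP.
  case=> q; rewrite inE => /exists_inP [y hy hc] ->.
  move: hy; rewrite inE => /exists_inP [x hx he].
  rewrite inE; apply/exists_inP; exists (qc y); last exact: quot_connect.
  by rewrite inE; apply/exists_inP; exists (qc x); [exact: imset_f | exact: quot_edge].
rewrite inE => /exists_inP [E hE hc].
move: hE; rewrite inE => /exists_inP [C /imsetP [x hx ->] /quot_edge_wtr [y [eE hw]]].
have [m [n [h1 h2 h3]]] := wtr_single hw.
rewrite eE in hc; have [q [-> hq]] := quot_connect_lower hc.
exists q => //; rewrite inE; apply/exists_inP; exists n; last exact: connect_trans h3 hq.
by rewrite inE; apply/exists_inP; exists m => //; exact: hX h1.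
Qed.

Lemma qc_UR_init : qc @: UR G (init' G) = UR Gq (init' Gq).
Proof.
apply/setP => D; apply/imsetP/idP.
  case=> q; rewrite inE => /exists_inP [x0 hx0 hc] ->.
  rewrite inE; apply/exists_inP; exists (qc x0); last exact: quot_connect.
  by rewrite /init' in_setI /= qc_state andbT; apply: imset_f.
rewrite inE => /exists_inP [C hC hc].
move: hC; rewrite /init' in_setI /= => /andP [/imsetP [x0 hx0 eC] _]; subst C.
have [q [-> hq]] := quot_connect_lower hc.
by exists q => //; rewrite inE; apply/exists_inP; exists x0.
Qed.

Lemma qc_subset_secret (X : {set Q}) : (qc @: X \subset qsecret G simo Qs) = (X \subset Qs).
Proof.
apply/idP/idP => [h|]; last exact: imsetS.
apply/subsetP => x hx; have /imsetP [q hq e] := subsetP h _ (imset_f qc hx).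
have r : simo q x by apply: (qcls_eq_rel Hsimo.1); rewrite ?statesG.
by have := (Hsimo.2 q x (statesG _) (statesG _) r).2; case=> /(_ hq).
Qed.

Lemma bisimilar_pre_det_quot : bisimilar (pre_det G) (pre_det Gq)
  (fun X => X \subset Qs) (fun Y => Y \subset qsecret G simo Qs).
Proof.
exists (fun (X : {set Q}) Y => Y = qc @: X /\ tau_closed G X); last first.
  by move=> X _ [-> _]; rewrite qc_subset_secret.
split.
- move=> X; rewrite in_setI in_set1 => /andP [/eqP -> _].
  exists (UR Gq (init' Gq)); rewrite in_setI in_set1 eqxx in_setT.
  by split=> //; split; [rewrite qc_UR_init | exact: tau_closed_UR].
- move=> Y; rewrite in_setI in_set1 => /andP [/eqP -> _].
  exists (UR G (init' G)); rewrite in_setI in_set1 eqxx in_setT.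
  by split=> //; split; [rewrite qc_UR_init | exact: tau_closed_UR].
- move=> X Y a X' [-> hX]; rewrite edge_pre_det => /andP [/eqP -> hne].
  exists (UR Gq (post Gq (qc @: X) a)); rewrite -qc_UR_post //.
  rewrite edge_pre_det {1}qc_UR_post // eqxx imset_eq0.
  by split=> //; split=> //; exact: tau_closed_UR.
- move=> X Y a Y' [-> hX]; rewrite edge_pre_det => /andP [/eqP -> hne].
  exists (UR G (post G X a)); rewrite -qc_UR_post //.
  rewrite edge_pre_det eqxx -(imset_eq0 qc) qc_UR_post //.
  by split=> //; split=> //; exact: tau_closed_UR.
Qed.

Lemma bisimilar_det_quot : bisimilar (det G) (det Gq)
  (fun X => X \subset Qs) (fun Y => Y \subset qsecret G simo Qs).
Proof.
apply: bisimilar_trans (bisimilar_trim _ _) _.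
exact: bisimilar_trans bisimilar_pre_det_quot (bisimilar_sym (bisimilar_trim _ _)).
Qed.
End QuotientObserver.

Theorem theorem3 (Sig Q : finType) (G : aut (option Sig) Q) (Qs : {set Q})
  (HQ : states G = [set: Q])
  (Hsec : ~~ (UR G (init G) \subset Qs))
  (simo : rel Q) (Hsimo : opaque_obs_eq G Qs simo)
  (ob : rel {set {set Q}})
  (Hob : opaque_bisim (det (quot G simo)) (qsecret G simo Qs) ob)
  (b : rel {set {set Q}})
  (Hb : bisim (det (quot G simo)) b) :
  let Hob_q := quot (det (quot G simo)) ob in
  let Hb_q := quot (det (quot G simo)) b in
  let Hobd := trim (delete Hob_q
                 [set C : {set {set {set Q}}} | [exists X in C, X \subset qsecret G simo Qs]]) in
  forall w : seq (tlabel Sig),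
    tpo_trace (det_d G Qs) (det G) w <-> tpo_trace Hobd Hb_q w.
Proof.
move=> Hob_q Hb_q Hobd w.
have Hob_bisim := opaque_bisim_bisim Hob.
have hGq := bisimilar_det_quot HQ Hsimo.
have hob := bisimilar_trans hGq (bisimilar_quot Hob_bisim (opaque_bisim_secret Hob)).
have hb := bisimilar_trans (bisimilar_predT hGq)
  (bisimilar_quot Hb (P := predT) (fun _ _ _ _ _ => erefl)).
have hd := bisimilar_trans (bisimilar_trim _ _)
  (bisimilar_trans (bisimilar_delete hob) (bisimilar_sym (bisimilar_trim _ _))).
apply: tpo_trace_bisimilar hd hb.
- exact: deterministic_trim (deterministic_delete _ (deterministic_det G)).
- exact: deterministic_det.
- apply/deterministic_trim/deterministic_delete.
  exact: deterministic_quot Hob_bisim (deterministic_det _).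
- exact: deterministic_quot Hb (deterministic_det _).
Qed.
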